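(* Let $W$ be an arbitrary quantum walk on $\ell^2(\mathbb{Z})\otimes\mathbb{C}^2$ and $k\in\mathbb{N}$. Then $v(W^k)=k\,v(W)$.
   Context: $\ell^2(\mathbb{Z})\otimes\mathbb{C}^2$ has basis $\delta_j^\pm=\delta_j\otimes e_\pm$. State-dependent shifts: $S_\pm=T^{\pm1}\otimes P_\pm+\mathbb{1}\otimes P_\mp$, where $T\delta_j=\delta_{j+1}$ and $P_\pm$ are the projections onto $e_+=(1,0)^\top$, $e_-=(0,1)^\top$. A coin operator acts as $C(\delta_j\otimes v)=\delta_j\otimes C(j)v$ with $C(j)$ unitary $2\times2$ matrices. A quantum walk is a finite product of shift operators $S_\pm$ and coin operators. $Q\delta_j^\pm=j\delta_j^\pm$ is the position operator. For a walk $W$ and normalized $\psi\in\mathrm{dom}(Q)$, $v(W,\psi)=\limsup_{t\to\infty,\,t\in\mathbb{N}}\frac1t\|QW^t\psi\|$, and $v(W)=\sup\{v(W,\psi):\psi\in\mathrm{dom}(Q),\|\psi\|=1\}$. *)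

From HB Require Import structures.
From mathcomp Require Import all_boot all_order all_algebra.
From mathcomp Require Import complex.
From mathcomp Require Import all_classical all_reals all_analysis.
Set Implicit Arguments. Unset Strict Implicit. Unset Printing Implicit Defensive.
Import Order.TTheory GRing.Theory Num.Theory.
Local Open Scope ring_scope.
Local Open Scope classical_set_scope.

Section QW.
Variable R : realType.
Local Notation C := (R[i]).

(* A (not necessarily square-summable) vector-valued sequence: psi j is the
   column vector (psi(j)_+, psi(j)_-) in C^2; index 0 = e_+, index 1 = e_-.
   Elements of l^2(Z) (x) C^2 are those with finite l2_norm2. *)
Definition state := int -> 'cV[C]_2.

Definition ep : 'I_2 := ord0.
Definition em : 'I_2 := ord_max.

Definition cabs2 (z : C) : R := (complex.Re z) ^+ 2 + (complex.Im z) ^+ 2.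

Definition vabs2 (v : 'cV[C]_2) : R := cabs2 (v ep 0) + cabs2 (v em 0).

Definition l2_norm2 (psi : state) : \bar R :=
  \esum_(j in [set: int]) (vabs2 (psi j))%:E.
Definition Q_norm2 (psi : state) : \bar R :=
  \esum_(j in [set: int]) ((j%:~R : R) ^+ 2 * vabs2 (psi j))%:E.

Definition esqrt (x : \bar R) : \bar R :=
  match x with
  | EFin r => (Num.sqrt r)%:E
  | EPInf => +oo%E
  | ENInf => 0%E
  end.

Definition normalized_domQ (psi : state) : Prop :=
  l2_norm2 psi = 1%E /\ (Q_norm2 psi < +oo)%E.

Definition adjmx (A : 'M[C]_2) : 'M[C]_2 := (map_mx (@conjc R) A)^T.
Definition unitary_mx (A : 'M[C]_2) : Prop :=
  A *m adjmx A = 1%:M /\ adjmx A *m A = 1%:M.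

Inductive step :=
| Splus                     (* S_+ = T (x) P_+ + 1 (x) P_- *)
| Sminus                    (* S_- = T^-1 (x) P_- + 1 (x) P_+ *)
| Coin of (int -> 'M[C]_2). (* C (delta_j (x) v) = delta_j (x) C(j) v *)

Definition step_ok (s : step) : Prop :=
  match s with Coin c => forall j, unitary_mx (c j) | _ => True end.

(* (T f)(j) = f(j-1), since T delta_j = delta_(j+1) *)
Definition step_act (s : step) (psi : state) : state :=
  match s with
  | Splus => fun j => \col_(i < 2) (if i == ep then psi (j - 1) i 0 else psi j i 0)
  | Sminus => fun j => \col_(i < 2) (if i == em then psi (j + 1) i 0 else psi j i 0)
  | Coin c => fun j => c j *m psi j
  end.

(* a quantum walk: a finite product [:: A1; ...; An] = A1 A2 ... An *)
Definition walk := seq step.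
Definition walk_ok (W : walk) : Prop := foldr (fun s P => step_ok s /\ P) True W.

Definition walk_act (W : walk) (psi : state) : state :=
  foldr step_act psi W.

Definition walk_pow (W : walk) (k : nat) : walk := flatten (nseq k W).

Definition velocity_at (W : walk) (psi : state) : \bar R :=
  limn_esup (fun t : nat => ((t%:R : R)^-1)%:E * esqrt (Q_norm2 (iter t (walk_act W) psi)))%E.

Definition velocity (W : walk) : \bar R :=
  ereal_sup [set velocity_at W psi | psi in normalized_domQ].

End QW.

From HB Require Import structures.
From mathcomp Require Import all_boot all_order all_algebra.
From mathcomp Require Import complex.
From mathcomp Require Import all_classical all_reals all_analysis.
From mathcomp Require Import ring lra.
Import Order.TTheory GRing.Theory Num.Theory.
Local Open Scope ring_scope.

(* If psi is normalized and in dom(Q), every factor of a walk preserves ||psi||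
   and, through the weighted inequality (j + d)^2 <= (1 + e) j^2 + (1 + 1/e) d^2
   for |d| <= 1 with e = 1/(||Q psi|| + 1), increases ||Q psi|| by at most 2.
   Hence f t := ||Q W^t psi|| is nonnegative with increments at most c = 2|W|.
   For such f, limsup f(kt)/t = k limsup f(t)/t: the multiples of k form a
   subsequence, and conversely f(km + r) <= f(km) + ck for r < k.  Since
   v(W^k, psi) = limsup f(kt)/t, taking the supremum over psi gives the claim. *)

Section GrowthRate.
Context {R : realType}.
Local Open Scope ereal_scope.
Local Open Scope classical_set_scope.

Lemma limn_esupZl (k : R) (u : (\bar R)^nat) : (0 < k)%R ->
  limn_esup (fun n => k%:E * u n) = k%:E * limn_esup u.
Proof.
move=> k0; rewrite /limn_esup !limf_esupE -ereal_inf_pZl //.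
congr ereal_inf; rewrite image_comp; apply: eq_imagel => V _ /=.
by rewrite -ereal_sup_pZl // image_comp.
Qed.

Lemma limn_esup_le_approx (u v : (\bar R)^nat) :
  (forall e : R, (0 < e)%R -> forall N, exists N', forall n, (N' <= n)%N ->
     exists2 m, (N <= m)%N & u n <= v m + e%:E) ->
  limn_esup u <= limn_esup v.
Proof.
have limn_esup_inf w : limn_esup w = ereal_inf (range (esups w)).
  by rewrite limn_esup_lim; apply/cvg_lim/cvg_esups_inf.
move=> uv; apply/lee_addgt0Pr => e e0.
rewrite -leeBlDr // [X in _ <= X]limn_esup_inf.
apply: le_ereal_inf_tmp => _ [N _ <-].
have [N' uvN'] := uv e e0 N.
rewrite leeBlDr // limn_esup_inf.
apply: (le_trans (ereal_inf_lbound _)); first by exists N'.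
apply: ge_ereal_sup => _ [n /= N'n <-].
have [m Nm um] := uvN' n N'n.
apply: (le_trans um); rewrite leeD2r //.
by apply: ereal_sup_ubound; exists m.
Qed.

Definition growth_rate (f : nat -> R) : \bar R :=
  limn_esup (fun t => ((t%:R)^-1 * f t)%:E).

Lemma growth_rate_cst (a : R) : growth_rate (fun=> a) = 0.
Proof.
apply: (cvg_limn_einf_sup _).2; apply: cvg_EFin; first exact: nearW.
have invn0 : (fun t : nat => (t%:R : R)^-1)%R @ \oo --> 0%R.
  apply/(cvgrVy _).1; first by near=> t; rewrite invr_gt0 ltr0n; near: t; exact: nbhs_infty_gt.
  by apply: cvg_trans cvgr_idn; apply: near_eq_cvg; near=> t; rewrite /= invrK.
by rewrite -(mul0r a); exact: cvgMr_tmp.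
Unshelve. all: by end_near.
Qed.

Lemma limn_esup_subseq_le (u : (\bar R)^nat) (s : nat -> nat) :
  (forall n, (n <= s n)%N) -> limn_esup (u \o s) <= limn_esup u.
Proof.
move=> sn; apply: limn_esup_le_approx => e e0 N.
exists N => n Nn; exists (s n); first exact: leq_trans Nn (sn n).
by rewrite leeDl // lee_fin ltW.
Qed.

Section BoundedIncrements.
Context {f : nat -> R} {c : R}.
Hypotheses (c_ge0 : (0 <= c)%R) (f_ge0 : forall n, (0 <= f n)%R)
  (f_incr : forall n, (f n.+1 <= f n + c)%R).

Lemma bounded_increments_iter m d : (f (m + d)%N <= f m + c * d%:R)%R.
Proof.
elim: d => [|d IH]; first by rewrite addn0 mulr0 addr0.
rewrite addnS -natr1 mulrDr mulr1 addrA.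
by apply: le_trans (f_incr _) _; rewrite lerD2r.
Qed.

Lemma growth_rate_le_subseq k : (0 < k)%N ->
  growth_rate f <= limn_esup (fun t => (((k * t)%:R)^-1 * f (k * t)%N)%:E).
Proof.
move=> k0; apply: limn_esup_le_approx => e e0 N.
exists (k * N.+1 + Num.truncn (c * k%:R / e)).+1 => n Nn.
set m := (n %/ k)%N.
have Nm : (N.+1 <= m)%N.
  by rewrite leq_divRL // mulnC; apply: leq_trans (ltnW Nn); rewrite leq_addr.
exists m; first exact: ltnW.
have km_gt0 : (0 < (k * m)%:R :> R)%R by rewrite ltr0n muln_gt0 k0 (leq_trans _ Nm).
have km_le : ((k * m)%:R <= n%:R :> R)%R by rewrite ler_nat mulnC leq_divM.
have n_gt0 : (0 < n%:R :> R)%R by apply: lt_le_trans km_le.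
have fn_le : (f n <= f (k * m)%N + c * k%:R)%R.
  rewrite {1}(divn_eq n k) mulnC; apply: le_trans (bounded_increments_iter _ _) _.
  by rewrite lerD2l ler_wpM2l // ler_nat ltnW // ltn_pmod.
have ck_lt : (c * k%:R / e < n%:R)%R.
  apply: lt_le_trans (truncnS_gt _) _; rewrite ler_nat.
  by apply: leq_trans Nn; rewrite ltnS leq_addl.
rewrite -EFinD lee_fin.
have /le_trans -> // : (n%:R^-1 * f n <= n%:R^-1 * (f (k * m)%N + c * k%:R))%R.
  by rewrite ler_wpM2l // invr_ge0 ltW.
rewrite mulrDr; apply: lerD.
  by rewrite ler_wpM2r // lef_pV2 ?posrE.
by rewrite mulrC ler_pdivrMr // [(e * _)%R]mulrC -ler_pdivrMr // ltW.
Qed.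

Lemma growth_rate_subseq k :
  growth_rate (fun t => f (k * t)%N) = k%:R%:E * growth_rate f.
Proof.
have [->|k0] := posnP k.
  have -> : (fun t => f (0 * t)%N) = fun=> f 0%N by apply/funext => t; rewrite mul0n.
  by rewrite mul0e growth_rate_cst.
have -> : growth_rate (fun t => f (k * t)%N) =
    k%:R%:E * limn_esup (fun t => (((k * t)%:R)^-1 * f (k * t)%N)%:E).
  rewrite -limn_esupZl ?ltr0n //; congr limn_esup; apply/funext => t.
  by rewrite -EFinM natrM invfM !mulrA mulfV ?mul1r // pnatr_eq0 -lt0n.
congr (_ * _); apply/eqP; rewrite eq_le growth_rate_le_subseq // andbT.
by apply: (limn_esup_subseq_le (fun n => (n%:R^-1 * f n)%:E)) => n; rewrite leq_pmull.
Qed.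

End BoundedIncrements.

End GrowthRate.

Section ExtendedSums.
Context {R : realType}.
Local Open Scope ereal_scope.

Lemma esumD_EFin {T : choiceType} {I : set T} {f g : T -> R} :
  (forall j, 0 <= f j)%R -> (forall j, 0 <= g j)%R ->
  \esum_(j in I) (f j + g j)%:E = \esum_(j in I) (f j)%:E + \esum_(j in I) (g j)%:E.
Proof.
move=> f_ge0 g_ge0; under eq_esum do rewrite EFinD.
by rewrite esumD // => j _; rewrite lee_fin.
Qed.

Lemma esumZl_EFin {T : choiceType} {I : set T} {c : R} {f : T -> R} :
  (0 < c)%R -> (forall j, 0 <= f j)%R ->
  \esum_(j in I) (c * f j)%:E = c%:E * \esum_(j in I) (f j)%:E.
Proof.
move=> c_gt0 f_ge0; rewrite /esum -ereal_sup_pZl //; congr ereal_sup.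
rewrite image_comp; apply: eq_imagel => X _ /=.
by rewrite ge0_mule_fsumr // => j; rewrite lee_fin.
Qed.

Lemma esum_shift {V : zmodType} (a : V -> \bar R) (d : V) :
  \esum_(j in [set: V]) a (j + d)%R = \esum_(j in [set: V]) a j.
Proof.
symmetry; apply: (reindex_esum _ _ (fun j => j + d)%R).
by rewrite setTT_bijective; exists (fun j => j - d)%R => j; [exact: addrK | exact: subrK].
Qed.

End ExtendedSums.

Lemma sqrrD_le_weighted {R : realFieldType} (x y e : R) : 0 < e ->
  (x + y) ^+ 2 <= (1 + e) * x ^+ 2 + (1 + e^-1) * y ^+ 2.
Proof.
move=> e_gt0; rewrite -subr_ge0.
have -> : (1 + e) * x ^+ 2 + (1 + e^-1) * y ^+ 2 - (x + y) ^+ 2 =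
    e^-1 * (e * x - y) ^+ 2.
  by field; rewrite gt_eqF.
by rewrite mulr_ge0 ?sqr_ge0 // invr_ge0 ltW.
Qed.

Section QuantumWalk.
Variable R : realType.
Local Notation C := R[i].

Lemma cabs2_ge0 (z : C) : 0 <= cabs2 z.
Proof. by rewrite addr_ge0 ?sqr_ge0. Qed.

Lemma vabs2_ge0 (v : 'cV[C]_2) : 0 <= vabs2 v.
Proof. by rewrite addr_ge0 ?cabs2_ge0. Qed.

Lemma l2_norm2_ge0 (psi : state R) : (0 <= l2_norm2 psi)%E.
Proof. by apply: esum_ge0 => j _; rewrite lee_fin vabs2_ge0. Qed.

Lemma Q_norm2_ge0 (psi : state R) : (0 <= Q_norm2 psi)%E.
Proof. by apply: esum_ge0 => j _; rewrite lee_fin mulr_ge0 ?sqr_ge0 ?vabs2_ge0. Qed.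

Lemma cabs2E (z : C) : ((cabs2 z)%:C = z^* * z)%C.
Proof.
case: z => a b; apply/eqP; rewrite /cabs2 eq_complex /=.
by apply/andP; split; apply/eqP; ring.
Qed.

Lemma vabs2E (v : 'cV[C]_2) : ((vabs2 v)%:C)%C = ((map_mx conjc v)^T *m v) 0 0.
Proof.
rewrite mxE !big_ord_recr big_ord0 /= add0r !mxE /vabs2 rmorphD /= !cabs2E.
by have -> : widen_ord (leqnSn 1) ord_max = ep by apply/val_inj.
Qed.

Lemma vabs2_unitary (U : 'M[C]_2) (v : 'cV[C]_2) :
  unitary_mx U -> vabs2 (U *m v) = vabs2 v.
Proof.
move=> [_ UU]; apply: complexI; rewrite !vabs2E.
by rewrite map_mxM trmx_mul -mulmxA (mulmxA _ U) UU mul1mx.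
Qed.

Section ShiftedComponent.
Context {a b : int -> R} {d : int}.
Hypotheses (a_ge0 : forall j, 0 <= a j) (b_ge0 : forall j, 0 <= b j).

Lemma esum_shift_component :
  \esum_(j in [set: int]) (a (j - d) + b j)%:E = \esum_(j in [set: int]) (a j + b j)%:E.
Proof.
rewrite (esumD_EFin (fun j => a_ge0 (j - d)) b_ge0) (esumD_EFin a_ge0 b_ge0).
by rewrite (esum_shift (fun j => (a j)%:E) (- d)).
Qed.

Lemma esum_moment_shift_component_le (e : R) : 0 < e -> d ^+ 2 <= 1 ->
  (\esum_(j in [set: int]) ((j%:~R : R) ^+ 2 * (a (j - d) + b j))%:E <=
   (1 + e)%:E * (\esum_(j in [set: int]) ((j%:~R : R) ^+ 2 * (a j + b j))%:E) +
   (1 + e^-1)%:E * (\esum_(j in [set: int]) (a j + b j)%:E))%E.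
Proof.
move=> e_gt0 d_le1.
have e1_gt0 : 0 < 1 + e by rewrite addr_gt0.
have einv1_gt0 : 0 < 1 + e^-1 by rewrite addr_gt0 ?invr_gt0.
have w_ge0 (f : int -> R) (x : int -> int) : (forall j, 0 <= f j) ->
    forall j, 0 <= (x j)%:~R ^+ 2 * f j :> R.
  by move=> f_ge0 j; rewrite mulr_ge0 ?sqr_ge0.
have ab_ge0 j : 0 <= a j + b j by rewrite addr_ge0.
have shiftE : \esum_(j in [set: int]) ((j%:~R : R) ^+ 2 * (a (j - d) + b j))%:E =
    \esum_(j in [set: int]) (((j + d)%:~R : R) ^+ 2 * a j + (j%:~R : R) ^+ 2 * b j)%:E.
  under eq_esum do rewrite mulrDr.
  rewrite (esumD_EFin (w_ge0 _ id (fun j => a_ge0 (j - d))) (w_ge0 _ id b_ge0)).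
  rewrite (esumD_EFin (w_ge0 _ (fun j => j + d) a_ge0) (w_ge0 _ id b_ge0)).
  rewrite -(esum_shift (fun j => (((j + d)%:~R : R) ^+ 2 * a j)%:E) (- d)).
  by congr (_ + _)%E; apply: eq_esum => j _; rewrite subrK.
have wab_ge0 := w_ge0 _ id ab_ge0.
rewrite shiftE -(esumZl_EFin e1_gt0 wab_ge0) -(esumZl_EFin einv1_gt0 ab_ge0).
rewrite -(esumD_EFin (fun j => mulr_ge0 (ltW e1_gt0) (wab_ge0 j))
  (fun j => mulr_ge0 (ltW einv1_gt0) (ab_ge0 j))).
apply: le_esum => j _; rewrite lee_fin.
set K := (1 + e) * (j%:~R : R) ^+ 2 + (1 + e^-1).
have shifted_le : ((j + d)%:~R : R) ^+ 2 <= K.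
  have d2_le1 : (d%:~R : R) ^+ 2 <= 1 by rewrite -rmorphXn /= lerz1.
  by rewrite intrD (le_trans (sqrrD_le_weighted _ _ _ e_gt0)) // lerD2l ler_piMr // ltW.
have unshifted_le : (j%:~R : R) ^+ 2 <= K.
  by have := sqr_ge0 (j%:~R : R); rewrite /K; nra.
have -> : (1 + e) * ((j%:~R : R) ^+ 2 * (a j + b j)) + (1 + e^-1) * (a j + b j) =
    K * a j + K * b j by rewrite /K; ring.
by rewrite lerD // ler_wpM2r.
Qed.

Context {phi psi : state R}.
Hypotheses (psiE : forall j, vabs2 (psi j) = a j + b j)
  (phiE : forall j, vabs2 (phi j) = a (j - d) + b j).

Lemma l2_norm2_shifted : l2_norm2 phi = l2_norm2 psi.
Proof.
rewrite /l2_norm2 (eq_esum (fun j _ => congr1 EFin (phiE j))).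
by rewrite (eq_esum (fun j _ => congr1 EFin (psiE j))) esum_shift_component.
Qed.

Lemma Q_norm2_shifted_le e : 0 < e -> d ^+ 2 <= 1 ->
  (Q_norm2 phi <= (1 + e)%:E * Q_norm2 psi + (1 + e^-1)%:E * l2_norm2 psi)%E.
Proof.
move=> e_gt0 d_le1; rewrite /Q_norm2 /l2_norm2.
rewrite (eq_esum (fun j _ => congr1 (fun x => EFin (_ * x)) (phiE j))).
rewrite !(eq_esum (fun j _ => congr1 (fun x => EFin (_ * x)) (psiE j))).
by rewrite (eq_esum (fun j _ => congr1 EFin (psiE j))) esum_moment_shift_component_le.
Qed.

End ShiftedComponent.

Lemma vabs2_Splus (psi : state R) j :
  vabs2 (step_act (@Splus R) psi j) = cabs2 (psi (j - 1) ep 0) + cabs2 (psi j em 0).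
Proof. by rewrite /vabs2 /= !mxE eqxx. Qed.

(* The index [j - -1] puts the shifted component in the form [a (j - d)]. *)
Lemma vabs2_Sminus (psi : state R) j :
  vabs2 (step_act (@Sminus R) psi j) = cabs2 (psi (j - -1) em 0) + cabs2 (psi j ep 0).
Proof. by rewrite /vabs2 /= !mxE eqxx opprK addrC. Qed.

Lemma vabs2_Coin (c : int -> 'M[C]_2) (psi : state R) j :
  (forall j, unitary_mx (c j)) -> vabs2 (step_act (Coin c) psi j) = vabs2 (psi j).
Proof. by move=> c_unitary; exact: vabs2_unitary. Qed.

Definition Q_norm (psi : state R) : R := Num.sqrt (fine (Q_norm2 psi)).

Lemma Q_norm2E (psi : state R) : normalized_domQ psi -> Q_norm2 psi = (Q_norm psi ^+ 2)%:E.
Proof.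
move=> [_ Q_fin]; have Q_ge0 := Q_norm2_ge0 psi.
by rewrite sqr_sqrtr ?fine_ge0 // fineK // ge0_fin_numE.
Qed.

Section Step.
Context {s : step R} {psi : state R}.
Hypothesis s_ok : step_ok s.

Let comp (i : 'I_2) (j : int) := cabs2 (psi j i 0).
Let comp_ge0 i j : 0 <= comp i j := cabs2_ge0 _.

Lemma l2_norm2_step : l2_norm2 (step_act s psi) = l2_norm2 psi.
Proof.
case: s s_ok => [_|_|c c_unitary].
- exact: (l2_norm2_shifted (comp_ge0 ep) (comp_ge0 em) (fun=> erefl) (vabs2_Splus psi)).
- exact: (l2_norm2_shifted (comp_ge0 em) (comp_ge0 ep) (fun=> addrC _ _) (vabs2_Sminus psi)).
- by apply: eq_esum => j _; rewrite vabs2_Coin.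
Qed.

Lemma Q_norm2_step_le e : 0 < e ->
  (Q_norm2 (step_act s psi) <= (1 + e)%:E * Q_norm2 psi + (1 + e^-1)%:E * l2_norm2 psi)%E.
Proof.
move=> e_gt0; case: s s_ok => [_|_|c c_unitary].
- by apply: (Q_norm2_shifted_le (comp_ge0 ep) (comp_ge0 em) (fun=> erefl) (vabs2_Splus psi)).
- by apply: (Q_norm2_shifted_le (comp_ge0 em) (comp_ge0 ep) (fun=> addrC _ _) (vabs2_Sminus psi)).
have -> : Q_norm2 (step_act (Coin c) psi) = Q_norm2 psi.
  by apply: eq_esum => j _; rewrite vabs2_Coin.
apply: le_trans (leeDl _ _).
  by rewrite lee_pemull ?Q_norm2_ge0 // lee_fin lerDl ltW.
by rewrite mule_ge0 ?l2_norm2_ge0 // lee_fin addr_ge0 ?invr_ge0 ?ltW.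
Qed.

Lemma normalized_domQ_step : normalized_domQ psi -> normalized_domQ (step_act s psi).
Proof.
move=> psi_ok; split; first by rewrite l2_norm2_step; case: psi_ok.
apply: le_lt_trans (Q_norm2_step_le 1 ltr01) _.
by rewrite Q_norm2E // psi_ok.1 -!EFinM -EFinD ltry.
Qed.

Lemma Q_norm_step_le : normalized_domQ psi -> Q_norm (step_act s psi) <= Q_norm psi + 2.
Proof.
move=> psi_ok; set r := Q_norm psi.
have r_ge0 : 0 <= r by exact: sqrtr_ge0.
have e_gt0 : 0 < (r + 1)^-1 by rewrite invr_gt0 ltr_wpDl.
have := Q_norm2_step_le _ e_gt0.
rewrite (Q_norm2E _ (normalized_domQ_step psi_ok)) (Q_norm2E _ psi_ok) psi_ok.1 invrK.
rewrite -!EFinM -EFinD lee_fin => Q2_le.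
have frac_le : r ^+ 2 / (r + 1) <= r.
  by rewrite ler_pdivrMr ?ltr_wpDl // expr2 ler_wpM2l // lerDl.
have bound : (1 + (r + 1)^-1) * r ^+ 2 + (1 + (r + 1)) * 1 <= (r + 2) ^+ 2.
  have -> : (1 + (r + 1)^-1) * r ^+ 2 = r ^+ 2 + r ^+ 2 / (r + 1) by ring.
  nra.
by rewrite -(ler_pXn2r (_ : 0 < 2)%N) ?nnegrE ?addr_ge0 ?sqrtr_ge0 // (le_trans Q2_le).
Qed.

End Step.

Lemma walk_ok_cat (W1 W2 : walk R) : walk_ok W1 -> walk_ok W2 -> walk_ok (W1 ++ W2).
Proof. by elim: W1 => [|s W1 IH] //= [s_ok W1_ok] W2_ok; split; last exact: IH. Qed.

Lemma walk_ok_pow (W : walk R) k : walk_ok W -> walk_ok (walk_pow W k).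
Proof. by move=> W_ok; elim: k => [|k IH] //=; exact: walk_ok_cat. Qed.

Lemma walk_act_cat (W1 W2 : walk R) psi :
  walk_act (W1 ++ W2) psi = walk_act W1 (walk_act W2 psi).
Proof. exact: foldr_cat. Qed.

Lemma walk_act_pow (W : walk R) k psi : walk_act (walk_pow W k) psi = iter k (walk_act W) psi.
Proof. by elim: k => [|k IH] //=; rewrite walk_act_cat -IH. Qed.

Lemma iter_walk_act_pow (W : walk R) k t psi :
  iter t (walk_act (walk_pow W k)) psi = iter (k * t) (walk_act W) psi.
Proof. by elim: t => [|t IH]; rewrite ?muln0 // mulnS iterD /= IH walk_act_pow. Qed.

Lemma esqrt_Q_norm2 (psi : state R) :
  normalized_domQ psi -> esqrt (Q_norm2 psi) = (Q_norm psi)%:E.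
Proof. by move=> psi_ok; rewrite Q_norm2E //= sqrtr_sqr ger0_norm ?sqrtr_ge0. Qed.

Lemma normalized_domQ_walk (W : walk R) psi :
  walk_ok W -> normalized_domQ psi -> normalized_domQ (walk_act W psi).
Proof.
elim: W => [|s W IH] //= [s_ok W_ok] psi_ok.
exact/(normalized_domQ_step s_ok)/IH.
Qed.

Lemma Q_norm_walk_le (W : walk R) psi : walk_ok W -> normalized_domQ psi ->
  Q_norm (walk_act W psi) <= Q_norm psi + 2 * (size W)%:R.
Proof.
elim: W => [|s W IH] /= => [_ _|[s_ok W_ok] psi_ok]; first by rewrite mulr0 addr0.
apply: le_trans (Q_norm_step_le s_ok (normalized_domQ_walk _ _ W_ok psi_ok)) _.
by have := IH W_ok psi_ok; rewrite -[(size W).+1%:R]natr1; lra.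
Qed.

Section Walk.
Context {W : walk R}.
Hypothesis W_ok : walk_ok W.

Lemma normalized_domQ_iter psi t :
  normalized_domQ psi -> normalized_domQ (iter t (walk_act W) psi).
Proof. by move=> psi_ok; elim: t => //= t; exact: normalized_domQ_walk. Qed.

Lemma velocity_atE psi : normalized_domQ psi ->
  velocity_at W psi = growth_rate (fun t => Q_norm (iter t (walk_act W) psi)).
Proof.
move=> psi_ok; congr limn_esup; apply/funext => t.
by rewrite esqrt_Q_norm2 //; exact: normalized_domQ_iter.
Qed.

End Walk.

Lemma velocity_at_pow (W : walk R) k psi : walk_ok W -> normalized_domQ psi ->
  velocity_at (walk_pow W k) psi = (k%:R%:E * velocity_at W psi)%E.
Proof.
move=> W_ok psi_ok.
rewrite (velocity_atE (walk_ok_pow W k W_ok) _ psi_ok) (velocity_atE W_ok _ psi_ok).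
under [X in growth_rate X]eq_fun => t do rewrite iter_walk_act_pow.
have Q_ge0 t : 0 <= Q_norm (iter t (walk_act W) psi) by exact: sqrtr_ge0.
have c_ge0 : 0 <= 2 * (size W)%:R :> R by rewrite mulr_ge0.
apply: (growth_rate_subseq c_ge0 Q_ge0) => t /=.
exact/(Q_norm_walk_le _ _ W_ok)/normalized_domQ_iter.
Qed.

Definition delta0 : state R :=
  fun j => if j == 0 then \col_i (if i == ep then 1 else 0) else 0.

Lemma normalized_domQ_delta0 : normalized_domQ delta0.
Proof.
have vabs2_delta0 j : vabs2 (delta0 j) = (j == 0)%:R.
  by rewrite /delta0 /vabs2; case: eqP => _; rewrite !mxE /cabs2 /=; ring.
split.
  transitivity (\esum_(j in [set 0%R : int]) (1 : R)%:E); last by rewrite esum_set1.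
  rewrite [RHS]esum_mkcond; apply: eq_esum => j _.
  rewrite vabs2_delta0; have [->|j_neq0] := eqVneq j 0; first by rewrite mem_set.
  by rewrite memNset //; exact/eqP.
rewrite /Q_norm2 esum1 ?ltry // => j _.
by rewrite vabs2_delta0; case: eqP => [->|_]; rewrite ?mulr0 ?expr0n ?mul0r.
Qed.

End QuantumWalk.

Theorem lemma3p6 (R : realType) (W : walk R) (k : nat) :
  walk_ok W ->
  velocity (walk_pow W k) = ((k%:R : R)%:E * velocity W)%E.
Proof.
move=> W_ok; rewrite /velocity.
have -> : [set velocity_at (walk_pow W k) psi | psi in @normalized_domQ R]%classic =
    [set (k%:R%:E * v)%E | v in [set velocity_at W psi | psi in @normalized_domQ R]]%classic.
  by rewrite image_comp; apply: eq_imagel => psi psi_ok; rewrite velocity_at_pow.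
rewrite ereal_supZl //; apply/set0P.
by exists (velocity_at W (delta0 R)); exists (delta0 R); first exact: normalized_domQ_delta0.
Qed.
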